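(* Let $k$ be a difference field of characteristic $0$ and $R=k\{y_1,\ldots,y_n\}$. If $I,J$ are monomial $\sigma$-ideals of $R$, then $\langle I+J\rangle_r=\langle I\rangle_r+\langle J\rangle_r$.
   Context: A difference field is a field $k$ with a ring endomorphism $\sigma$; $R=k\{y_1,\ldots,y_n\}$ is the polynomial ring over $k$ in the variables $\sigma^j(y_i)$, with $\sigma$ extended naturally. For $p=\sum_ic_ix^i\in\mathbb{N}[x]$ and $a\in R$, $a^p=\prod_i(\sigma^i(a))^{c_i}$; monomials are $\mathbf{y}^{\mathbf{u}}=y_1^{u_1}\cdots y_n^{u_n}$ with $\mathbf{u}\in\mathbb{N}[x]^n$. A $\sigma$-ideal is an ideal stable under $\sigma$; monomial if generated by monomials; well-mixed if $ab\in I\Rightarrow a\sigma(b)\in I$. $\langle F\rangle_r$ is the smallest radical well-mixed $\sigma$-ideal containing $F$. *)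

From HB Require Import structures.
From mathcomp Require Import all_boot all_order all_algebra.
From mathcomp Require Import finmap.
From mathcomp.multinomials Require Import monalg.

Set Implicit Arguments.
Unset Strict Implicit.
Unset Printing Implicit Defensive.

Import GRing.Theory.
Local Open Scope ring_scope.

(* The variables sigma^j(y_i), i < n, j : nat, indexed by (i, j). *)
Definition dvar (n : nat) : choiceType := ('I_n * nat)%type.

(* Monomials y^u, u in N[x]^n: finitely supported exponent maps on the variables. *)
Definition dmonom (n : nat) := {cmonom (dvar n)}.

(* R = k{y_1,...,y_n}: polynomial ring over k in the variables sigma^j(y_i). *)
Definition dpoly (k : fieldType) (n : nat) := {malg k[dmonom n]}.

Definition dX (k : fieldType) (n : nat) (v : dvar n) : dpoly k n :=
  << (ucm v : dmonom n) >>.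

Definition dmono (k : fieldType) (n : nat) (m : dmonom n) : dpoly k n := << m >>.

(* Natural extension of sigma to R:
   sum c_m prod_v v^(m v)  |->  sum sigma(c_m) prod_v (sigma v)^(m v),
   with sigma(sigma^j y_i) = sigma^(j+1) y_i. *)
Definition dsigma (k : fieldType) (n : nat) (s : {rmorphism k -> k})
    (p : dpoly k n) : dpoly k n :=
  mmap (fun c : k => (s c)%:MP : dpoly k n)
       (fun m : dmonom n =>
          \prod_(v <- finsupp (m : {fsfun of _ : dvar n => 0%N}))
             dX k (v.1, v.2.+1) ^+ (m v))
       p.

Section Ideals.
Variables (k : fieldType) (n : nat) (s : {rmorphism k -> k}).
Local Notation R := (dpoly k n).

Definition is_ideal (I : R -> Prop) : Prop :=
  [/\ I 0, (forall a b, I a -> I b -> I (a + b)) & (forall r a, I a -> I (r * a))].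

Definition is_sigma_ideal (I : R -> Prop) : Prop :=
  is_ideal I /\ forall a, I a -> I (dsigma s a).

Definition is_well_mixed (I : R -> Prop) : Prop :=
  forall a b, I (a * b) -> I (a * dsigma s b).

Definition is_radical (I : R -> Prop) : Prop :=
  forall a m, I (a ^+ m.+1) -> I a.

Definition ideal_gen (F : R -> Prop) (x : R) : Prop :=
  forall J, is_ideal J -> (forall y, F y -> J y) -> J x.

Definition is_monomial_sigma_ideal (I : R -> Prop) : Prop :=
  is_sigma_ideal I /\
  exists M : dmonom n -> Prop,
    forall x, I x <-> ideal_gen (fun p => exists2 m, M m & p = dmono k m) x.

Definition rwm_closure (F : R -> Prop) (x : R) : Prop :=
  forall J, is_sigma_ideal J -> is_well_mixed J -> is_radical J ->
    (forall y, F y -> J y) -> J x.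

Definition ideal_add (I J : R -> Prop) (x : R) : Prop :=
  exists a b, [/\ I a, J b & x = a + b].
End Ideals.

(* For a set T of variables closed under the shift sigma^j(y_i) |-> sigma^(j+1)(y_i),
   the polynomials all of whose monomials contain a variable of T form an ideal P_T
   that is stable under sigma and prime, hence radical and well-mixed. Primality comes
   down to R being a domain: numbering monomials by prime factorisations embeds the
   monomial monoid into the positive integers, so the product of the maximal monomials
   of two nonzero polynomials survives in their product.
   Conversely, let W be a radical well-mixed sigma-ideal and y^u a monomial outside W.
   The variables none of whose shifts divide y^u form a shift-closed set T missing y^u
   and meeting every monomial y^w of W: otherwise well-mixedness shifts each variable
   of y^w up into y^u, putting (y^u)^deg(w) in W. For monomial I and J, applying this
   to <I>_r and <J>_r shows that every monomial of an element of <I + J>_r lies in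
   <I>_r or <J>_r, since P_(T1 u T2) contains I + J but not that monomial; splitting
   the element along its monomials gives the nontrivial inclusion. *)

From HB Require Import structures.
From mathcomp Require Import all_boot all_order all_algebra.
From mathcomp Require Import finmap.
From mathcomp.multinomials Require Import monalg.
From mathcomp Require Import zify ring.
From Stdlib Require Import Classical_Prop ClassicalEpsilon.

Set Implicit Arguments.
Unset Strict Implicit.
Unset Printing Implicit Defensive.

Import GRing.Theory.
Local Open Scope fset_scope.
Local Open Scope ring_scope.
Local Notation "1" := (@mone _) : monom_scope.
Local Notation "x * y" := (mmul x y) : monom_scope.

Fixpoint nth_prime (i : nat) : nat :=
  if i is i'.+1 then sval (prime_above (nth_prime i')) else 2.

Lemma nth_prime_prime i : prime (nth_prime i).
Proof. by case: i => [|i] //=; case: prime_above. Qed.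

Lemma nth_prime_ltS i : (nth_prime i < nth_prime i.+1)%N.
Proof. by rewrite /=; case: prime_above. Qed.

Lemma nth_prime_inj : injective nth_prime.
Proof.
have lt_prime : {homo nth_prime : i j / (i < j)%N}.
  exact: homo_ltn ltn_trans nth_prime_ltS.
by move=> i j eq_p; case: (ltngtP i j) => [/lt_prime|/lt_prime|//]; rewrite eq_p ltnn.
Qed.

Lemma eqn_mul_leq a b c d : (0 < a)%N -> (0 < b)%N -> (a <= c)%N -> (b <= d)%N ->
  (a * b)%N = (c * d)%N -> a = c /\ b = d.
Proof. nia. Qed.

Section GoedelNumbering.
Variable I : countType.
Implicit Types m : cmonom I.

Definition var_prime (i : I) : nat := nth_prime (choice.pickle i).

Lemma var_prime_gt0 i : (0 < var_prime i)%N.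
Proof. exact/prime_gt0/nth_prime_prime. Qed.

Lemma prod_var_prime_gt0 (r : seq I) m :
  (0 < \prod_(i <- r) var_prime i ^ m i)%N.
Proof. by rewrite prodn_gt0 // => i; rewrite expn_gt0 var_prime_gt0. Qed.

Definition gnum (m : cmonom I) : nat := (\prod_(i <- finsupp m) var_prime i ^ m i)%N.

Lemma gnumEw m (d : {fset I}) : finsupp m `<=` d ->
  gnum m = (\prod_(i <- d) var_prime i ^ m i)%N.
Proof.
move=> le; rewrite /gnum (big_fset_incl _ le) // => i _.
by rewrite -cmE_neq0 negbK => /eqP ->.
Qed.

Lemma gnumM m1 m2 : gnum (m1 * m2)%M = (gnum m1 * gnum m2)%N.
Proof.
rewrite (@gnumEw (m1 * m2)%M (finsupp m1 `|` finsupp m2)) ?mdomD //.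
rewrite (gnumEw (fsubsetUl _ (finsupp m2))) (gnumEw (fsubsetUr (finsupp m1) _)).
by rewrite -big_split; apply/eq_bigr => i _; rewrite cmM expnD.
Qed.

Lemma gnum_gt0 m : (0 < gnum m)%N.
Proof. exact: prod_var_prime_gt0. Qed.

Lemma logn_gnum m i : logn (var_prime i) (gnum m) = m i.
Proof.
have logn_prod (r : seq I) : logn (var_prime i) (\prod_(j <- r) var_prime j ^ m j) =
    (\sum_(j <- r) m j * (j == i))%N.
  elim: r => [|j r IH]; first by rewrite !big_nil logn1.
  rewrite !big_cons lognM ?IH ?expn_gt0 ?var_prime_gt0 ?prod_var_prime_gt0 //.
  rewrite lognX logn_prime ?nth_prime_prime //.
  by rewrite (inj_eq nth_prime_inj) (inj_eq (pcan_inj (@choice.pickleK I))) eq_sym.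
rewrite (@gnumEw m ([fset i] `|` finsupp m)) ?fsubsetUr // logn_prod.
rewrite (bigD1_seq i) ?fset_uniq ?in_fsetU ?in_fset1 ?eqxx //= muln1.
by rewrite big1 ?addn0 // => j /negbTE ->; rewrite muln0.
Qed.

Lemma gnum_inj : injective gnum.
Proof. by move=> m1 m2 eq_g; apply/eqP/cmP => i; rewrite -!logn_gnum eq_g. Qed.
End GoedelNumbering.

Lemma seq_argmax (T : eqType) (F : T -> nat) (a : T) (r : seq T) :
  exists2 x, x \in a :: r & {in a :: r, forall y, (F y <= F x)%N}.
Proof.
elim: r a => [|b r IH] a.
  by exists a; rewrite ?mem_head // => y; rewrite mem_seq1 => /eqP->.
have [x xr max_x] := IH b.
have [le_ax|lt_xa] := leqP (F a) (F x).
  by exists x => [|y]; rewrite in_cons ?xr ?orbT // => /orP[/eqP->|/max_x].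
exists a; rewrite ?mem_head // => y; rewrite in_cons => /orP[/eqP->//|/max_x le_yx].
exact: leq_trans le_yx (ltnW lt_xa).
Qed.

Section MalgIdomain.
Variables (I : countType) (R : idomainType).
Implicit Types f g : {malg R[cmonom I]}.

Lemma msupp_gnum_max f : f != 0 ->
  exists2 m, m \in msupp f & {in msupp f, forall m', (gnum m' <= gnum m)%N}.
Proof.
rewrite -msupp_eq0 => /fset0Pn[m0 m0_f].
case E: (msupp f : seq _) m0_f => [|a r]; first by rewrite -[_ \in _]/(_ \in (_ : seq _)) E.
by move=> _; have := seq_argmax (@gnum I) a r; rewrite -E.
Qed.

Lemma malg_mulf_neq0 f g : f != 0 -> g != 0 -> f * g != 0.
Proof.
move=> nz_f nz_g.
have [mf mf_f max_mf] := msupp_gnum_max nz_f.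
have [mg mg_g max_mg] := msupp_gnum_max nz_g.
have top_uniq k1 k2 : k1 \in msupp f -> k2 \in msupp g ->
    (k1 * k2 == mf * mg)%M = (k1 == mf) && (k2 == mg).
  move=> k1_f k2_g; apply/eqP/andP => [eq_k|[/eqP-> /eqP->]] //.
  have /(congr1 (@gnum I)) := eq_k; rewrite !gnumM.
  have := max_mf _ k1_f; have := max_mg _ k2_g.
  move=> le_k2 le_k1 /(eqn_mul_leq (gnum_gt0 k1) (gnum_gt0 k2) le_k1 le_k2).
  by case=> /gnum_inj-> /gnum_inj->; rewrite !eqxx.
have coef_top : (f * g)@_(mf * mg)%M = f@_mf * g@_mg.
  rewrite mcoeffMl (bigD1_seq _ mf_f (fset_uniq _)) (bigD1_seq _ mg_g (fset_uniq _)) /=.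
  rewrite top_uniq // !eqxx mulr1n big_seq_cond big1 => [|k2 /andP[k2_g ne_k2]].
    rewrite addr0 big_seq_cond big1 ?addr0 // => k1 /andP[k1_f ne_k1].
    by rewrite big_seq big1 // => k2 k2_g; rewrite top_uniq // (negbTE ne_k1).
  by rewrite top_uniq // (negbTE ne_k2) andbF.
apply: contra_neq (mulf_neq0 _ _ : f@_mf * g@_mg != 0) => [fg0||];
  by rewrite ?mcoeff_neq0 // -coef_top fg0 mcoeff0.
Qed.
End MalgIdomain.

Lemma msupp_split (K : choiceType) (G : zmodType) (P : K -> Prop) (f : {malg G[K]}) :
  exists f1 f2, [/\ f = f1 + f2,
    {in msupp f1, forall m, m \in msupp f /\ P m} &
    {in msupp f2, forall m, m \in msupp f /\ ~ P m}].
Proof.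
pose b m := if excluded_middle_informative (P m) then true else false.
have part (Q : K -> Prop) (c : pred K) : {in msupp f, forall m, c m -> Q m} ->
    {in msupp (\sum_(m <- msupp f | c m) << f@_m *g m >>), forall m, m \in msupp f /\ Q m}.
  move=> cQ; rewrite big_seq_cond; apply: (big_ind (fun g => {in msupp g, _})).
  - by move=> m; rewrite msupp0.
  - by move=> g1 g2 g1Q g2Q m /(fsubsetP (msuppD_le _ _)); rewrite in_fsetU => /orP[/g1Q|/g2Q].
  - move=> m /andP[m_f cm] m' /(fsubsetP msuppU_le); rewrite in_fset1 => /eqP->.
    by split; last exact: cQ.
exists (\sum_(m <- msupp f | b m) << f@_m *g m >>).
exists (\sum_(m <- msupp f | ~~ b m) << f@_m *g m >>).
split; first by rewrite {1}(monalgE f) (bigID b).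
- by apply: part => m _; rewrite /b; case: excluded_middle_informative.
- by apply: part => m _; rewrite /b; case: excluded_middle_informative.
Qed.

Section DifferencePolynomials.
Variables (k : fieldType) (n : nat) (s : {rmorphism k -> k}).
Local Notation R := (dpoly k n).
Local Notation M := (dmonom n).
Local Notation V := (dvar n).

Lemma dpoly_mulf_neq0 (f g : R) : f != 0 -> g != 0 -> f * g != 0.
Proof. exact: (@malg_mulf_neq0 (('I_n * nat)%type : countType)). Qed.

Lemma dmonoM (m1 m2 : M) : dmono k (m1 * m2)%M = dmono k m1 * dmono k m2.
Proof. by rewrite /dmono malgM_def fgmulUU mulr1. Qed.

Lemma dmonoZ (c : k) (m : M) : << c *g m >> = c%:MP * dmono k m :> R.
Proof. by rewrite malgM_def fgmulUU mulr1 mul1m. Qed.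

Lemma dmono1 : dmono k (1%M : M) = 1.
Proof. by []. Qed.

Lemma dXE (v : V) : dX k v = dmono k (ucm v).
Proof. by []. Qed.

Definition shift (v : V) : V := (v.1, v.2.+1).
Definition shiftn (j : nat) (v : V) : V := (v.1, (v.2 + j)%N).

Lemma shiftn0 v : shiftn 0 v = v.
Proof. by rewrite /shiftn addn0 -surjective_pairing. Qed.

Lemma shift_shiftn j v : shift (shiftn j v) = shiftn j.+1 v.
Proof. by rewrite /shift /shiftn addnS. Qed.

Lemma shiftn_shift j v : shiftn j (shift v) = shiftn j.+1 v.
Proof. by rewrite /shift /shiftn addSnnS. Qed.

Lemma dsigma_dX v : dsigma s (dX k v) = dX k (shift v).
Proof.
rewrite /dsigma mmapE /dX msuppU1 big_seq_fset1 mcoeffU1 eqxx /=.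
by rewrite rmorph1 mpolyC1E mul1r mdomU big_seq_fset1 cmUU expr1.
Qed.

Section Ideal.
Variables (W : R -> Prop) (idealW : is_ideal W).

Lemma ideal0 : W 0. Proof. by case: idealW. Qed.
Lemma idealD a b : W a -> W b -> W (a + b). Proof. by case: idealW => _ + _; apply. Qed.
Lemma idealMl r a : W a -> W (r * a). Proof. by case: idealW => _ _; apply. Qed.
Lemma idealMr r a : W a -> W (a * r). Proof. by rewrite mulrC; apply: idealMl. Qed.

Lemma idealB a b : W a -> W b -> W (a - b).
Proof. by move=> Wa Wb; rewrite -mulN1r; apply: idealD => //; apply: idealMl. Qed.

Lemma ideal_msupp (f : R) : {in msupp f, forall m, W (dmono k m)} -> W f.
Proof.
move=> Wf; rewrite (monalgE f) big_seq; apply: (big_ind W ideal0 idealD) => m m_f.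
by rewrite dmonoZ; apply/idealMl/Wf.
Qed.
End Ideal.

Definition meets (T : V -> Prop) (m : M) := exists2 v, v \in finsupp m & T v.

Definition var_ideal (T : V -> Prop) (f : R) := {in msupp f, forall m, meets T m}.

Definition shift_closed (T : V -> Prop) := forall v, T v -> T (shift v).

Lemma var_ideal_is_ideal T : is_ideal (var_ideal T).
Proof.
split.
- by move=> m; rewrite msupp0.
- move=> a b Ta Tb m /(fsubsetP (msuppD_le a b)).
  by rewrite in_fsetU => /orP[/Ta|/Tb].
- move=> r a Ta m /msuppM_le [m1 [m2 [_ m2_a ->]]].
  have [v v_m2 Tv] := Ta _ m2_a.
  by exists v => //; rewrite mdomD in_fsetU v_m2 orbT.
Qed.

Lemma var_ideal_dmono T m : meets T m -> var_ideal T (dmono k m).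
Proof. by move=> Tm m'; rewrite /dmono msuppU1 in_fset1 => /eqP->. Qed.

Lemma var_ideal_dsigma T f :
  shift_closed T -> var_ideal T f -> var_ideal T (dsigma s f).
Proof.
move=> closedT Tf; rewrite /dsigma mmapE big_seq.
have idealT := var_ideal_is_ideal T.
apply: (big_ind (var_ideal T) (ideal0 idealT) (idealD idealT)) => m m_f.
apply: (idealMl idealT).
have [v v_m Tv] := Tf _ m_f.
rewrite (bigD1_seq _ v_m (fset_uniq _)) /=; apply: (idealMr idealT).
have : m v != 0%N by rewrite cmE_neq0.
case: (m v) => [//|e] _; rewrite exprS; apply: (idealMr idealT).
by apply: var_ideal_dmono; exists (shift v); rewrite ?mdomU ?in_fset1 //; apply: closedT.
Qed.

Lemma var_ideal_prime T a b :
  var_ideal T (a * b) -> var_ideal T a \/ var_ideal T b.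
Proof.
have idealT := var_ideal_is_ideal T.
have [a1 [a2 [-> a1_T a2_T]]] := msupp_split (meets T) a.
have [b1 [b2 [-> b1_T b2_T]]] := msupp_split (meets T) b.
move=> Tab.
have Ta1 : var_ideal T a1 by move=> m /a1_T[].
have Tb1 : var_ideal T b1 by move=> m /b1_T[].
have Ta2b2 : var_ideal T (a2 * b2).
  have -> : a2 * b2 = (a1 + a2) * (b1 + b2) - (a1 * (b1 + b2) + a2 * b1) by ring.
  apply: (idealB idealT Tab).
  by apply: (idealD idealT); [apply: (idealMr idealT) | apply: (idealMl idealT)].
have free_a2b2 : {in msupp (a2 * b2), forall m, ~ meets T m}.
  move=> _ /msuppM_le [m1 [m2 [m1_a2 m2_b2 ->]]] [v].
  rewrite mdomD in_fsetU => /orP[v_m|v_m] Tv.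
    by apply: (a2_T _ m1_a2).2; exists v.
  by apply: (b2_T _ m2_b2).2; exists v.
have a2b2_0 : a2 * b2 = 0.
  apply/eqP; rewrite -msupp_eq0; apply/eqP/fsetP => m; rewrite in_fset0.
  by apply/negP => m_ab; apply: (free_a2b2 _ m_ab); apply: Ta2b2.
have [->|nz_a2] := eqVneq a2 0; first by left; rewrite addr0.
have [->|nz_b2] := eqVneq b2 0; first by right; rewrite addr0.
by have := dpoly_mulf_neq0 nz_a2 nz_b2; rewrite a2b2_0 eqxx.
Qed.

Lemma var_ideal_rwm T : shift_closed T ->
  [/\ is_sigma_ideal s (var_ideal T), is_well_mixed s (var_ideal T)
     & is_radical (var_ideal T)].
Proof.
have idealT := var_ideal_is_ideal T.
move=> closedT; split; first by split=> // f; apply: var_ideal_dsigma.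
- move=> a b /var_ideal_prime[Ta|Tb]; first exact: (idealMr idealT).
  by apply: (idealMl idealT); apply: var_ideal_dsigma.
- move=> a; elim=> [|e IH]; first by rewrite expr1.
  by rewrite exprS => /var_ideal_prime[|/IH].
Qed.

Lemma divcmUK (m : M) v : v \in finsupp m -> (divcm m (ucm v) * ucm v)%M = m.
Proof.
move=> v_m; apply/eqP/cmP => w; rewrite cmM divcmE cmU.
by case: eqVneq => [<-|_]; rewrite ?subn0 ?addn0 // subnK // lt0n cmE_neq0.
Qed.

Definition separates (W : R -> Prop) (T : V -> Prop) :=
  shift_closed T /\ forall m, W (dmono k m) -> meets T m.

Section RadicalWellMixed.
Variable W : R -> Prop.
Hypotheses (idealW : is_ideal W) (mixedW : is_well_mixed s W) (radW : is_radical W).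

Lemma well_mixed_shiftn a v j : W (a * dX k v) -> W (a * dX k (shiftn j v)).
Proof.
elim: j => [|j IH]; first by rewrite shiftn0; apply.
by move/IH/mixedW; rewrite dsigma_dX shift_shiftn; apply.
Qed.

Lemma well_mixed_pow_mdeg (m q : M) a :
  {in finsupp q, forall v, exists j, shiftn j v \in finsupp m} ->
  W (a * dmono k q) -> W (a * dmono k m ^+ mdeg q).
Proof.
move deg_q: (mdeg q) => d; elim: d q a deg_q => [|d IH] q a deg_q q_m.
  by rewrite (mdeg_eq0I deg_q) dmono1 expr0; apply.
have [v v_q] : exists v, v \in finsupp q.
  apply/fset0Pn; apply: contra_eqN deg_q => /eqP q0.
  by rewrite mdegE q0 big_seq_fset0.
have [j u_m] := q_m _ v_q; set u := shiftn j v in u_m.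
set q' := divcm q (ucm v); set m' := divcm m (ucm u).
have deg_q' : mdeg q' = d.
  by apply/eqP; rewrite -eqSS -deg_q -(divcmUK v_q) mdegM mdegU addn1.
have q'_m : {in finsupp q', forall w, exists j, shiftn j w \in finsupp m}.
  move=> w w_q'; apply: q_m; move: w_q'; rewrite -!cmE_neq0 divcmE.
  by apply: contra => /eqP->; rewrite sub0n.
move=> Waq; rewrite exprS mulrA; apply: (IH q' _ deg_q' q'_m).
have Wau : W (a * dmono k q' * dX k u).
  apply: well_mixed_shiftn.
  by rewrite -mulrA dXE -dmonoM divcmUK //; apply: Waq.
have -> : a * dmono k m * dmono k q' = dmono k m' * (a * dmono k q' * dX k u).
  rewrite dXE -[in LHS](divcmUK u_m) dmonoM -/m'.
  move: (dmono k m') (dmono k (ucm u)) (dmono k q') => x y z.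
  by ring.
exact: (idealMl idealW).
Qed.

Lemma separating_var_set m : ~ W (dmono k m) ->
  exists2 T, separates W T & ~ meets T m.
Proof.
move=> Wm; exists (fun w => ~ exists j, shiftn j w \in finsupp m); first split.
- by move=> w noshift [j]; rewrite shiftn_shift => wm; apply: noshift; exists j.+1.
- move=> m' Wm'; apply: NNPP => not_meets.
  have m'_m : {in finsupp m', forall w, exists j, shiftn j w \in finsupp m}.
    by move=> w w_m'; apply: NNPP => noshift; apply: not_meets; exists w.
  have := well_mixed_pow_mdeg (a := 1) m'_m; rewrite !mul1r => /(_ Wm').
  case: (mdeg m') => [|d]; last by move/radW.
  by rewrite expr0 => W1; apply: Wm; rewrite -[dmono k m]mulr1; apply: (idealMl idealW).
- by case=> v v_m; apply; exists 0%N; rewrite shiftn0.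
Qed.

End RadicalWellMixed.

Lemma rwm_closure_rwm (F : R -> Prop) :
  [/\ is_sigma_ideal s (rwm_closure s F), is_well_mixed s (rwm_closure s F)
     & is_radical (rwm_closure s F)].
Proof.
split; first split; first split.
- by move=> J sigmaJ _ _ _; apply: (ideal0 sigmaJ.1).
- move=> a b Fa Fb J sigmaJ mixedJ radJ FJ.
  exact: (idealD sigmaJ.1 (Fa J sigmaJ mixedJ radJ FJ) (Fb J sigmaJ mixedJ radJ FJ)).
- move=> r a Fa J sigmaJ mixedJ radJ FJ.
  exact: (idealMl sigmaJ.1 r (Fa J sigmaJ mixedJ radJ FJ)).
- move=> a Fa J sigmaJ mixedJ radJ FJ.
  exact: (sigmaJ.2 _ (Fa J sigmaJ mixedJ radJ FJ)).
- move=> a b Fab J sigmaJ mixedJ radJ FJ.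
  exact: (mixedJ _ _ (Fab J sigmaJ mixedJ radJ FJ)).
- move=> a e Fa J sigmaJ mixedJ radJ FJ.
  exact: (radJ _ _ (Fa J sigmaJ mixedJ radJ FJ)).
Qed.

Lemma rwm_closure_sub (F : R -> Prop) y : F y -> rwm_closure s F y.
Proof. by move=> Fy J _ _ _; apply. Qed.

Lemma rwm_closureS (F G : R -> Prop) : (forall y, F y -> G y) ->
  forall y, rwm_closure s F y -> rwm_closure s G y.
Proof.
move=> FG y Fy; have [sigmaG mixedG radG] := rwm_closure_rwm G.
by apply: (Fy _ sigmaG mixedG radG) => z /FG; apply: rwm_closure_sub.
Qed.

Lemma monomial_ideal_sub_var_ideal (I : R -> Prop) T : is_monomial_sigma_ideal s I ->
  (forall m, I (dmono k m) -> meets T m) -> forall y, I y -> var_ideal T y.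
Proof.
move=> [_ [G defI]] IT y /defI; apply; first exact: var_ideal_is_ideal.
move=> _ [m Gm ->]; apply/var_ideal_dmono/IT/defI => J _; apply.
by exists m.
Qed.

Lemma rwm_closure_add_msupp (I J : R -> Prop) (x : R) :
  is_monomial_sigma_ideal s I -> is_monomial_sigma_ideal s J ->
  rwm_closure s (ideal_add I J) x ->
  {in msupp x, forall m, rwm_closure s I (dmono k m) \/ rwm_closure s J (dmono k m)}.
Proof.
move=> monoI monoJ x_IJ m m_x; apply: NNPP => /not_or_and[notI notJ].
have [[sigmaI mixedI radI] [sigmaJ mixedJ radJ]] := (rwm_closure_rwm I, rwm_closure_rwm J).
have [T1 [closed1 sep1] m_T1] := separating_var_set sigmaI.1 mixedI radI notI.
have [T2 [closed2 sep2] m_T2] := separating_var_set sigmaJ.1 mixedJ radJ notJ.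
pose T v := T1 v \/ T2 v.
have closedT : shift_closed T by move=> v [/closed1|/closed2]; [left|right].
have [sigmaT mixedT radT] := var_ideal_rwm closedT.
have idealT := var_ideal_is_ideal T.
have : var_ideal T x.
  apply: (x_IJ _ sigmaT mixedT radT) => _ [a [b [Ia Jb ->]]]; apply: (idealD idealT).
  - apply: (monomial_ideal_sub_var_ideal monoI) Ia => m' /rwm_closure_sub/sep1.
    by case=> v v_m' T1v; exists v; last left.
  - apply: (monomial_ideal_sub_var_ideal monoJ) Jb => m' /rwm_closure_sub/sep2.
    by case=> v v_m' T2v; exists v; last right.
move/(_ m m_x) => [v v_m [T1v|T2v]]; [apply: m_T1 | apply: m_T2]; by exists v.
Qed.

Lemma ideal_add_msupp (W1 W2 : R -> Prop) x : is_ideal W1 -> is_ideal W2 ->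
  {in msupp x, forall m, W1 (dmono k m) \/ W2 (dmono k m)} -> ideal_add W1 W2 x.
Proof.
move=> idealW1 idealW2 W12x.
have [x1 [x2 [def_x x1_W1 x2_W2]]] := msupp_split (fun m => W1 (dmono k m)) x.
exists x1, x2; split; [apply: (ideal_msupp idealW1) | apply: (ideal_msupp idealW2) |].
- by move=> m /x1_W1[].
- move=> m /x2_W2[m_x notW1].
  by case: (W12x m m_x) => [W1m|W2m]; [case: notW1 | exact: W2m].
- exact: def_x.
Qed.

Lemma rwm_closure_ideal_add (I J : R -> Prop) x : I 0 -> J 0 ->
  ideal_add (rwm_closure s I) (rwm_closure s J) x -> rwm_closure s (ideal_add I J) x.
Proof.
move=> I0 J0 [a [b [Ia Jb ->]]].
have [[idealIJ _] _ _] := rwm_closure_rwm (ideal_add I J).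
apply: (idealD idealIJ).
- apply: (rwm_closureS _ Ia) => y Iy.
  by exists y, 0; split; [exact: Iy | exact: J0 | rewrite addr0].
- apply: (rwm_closureS _ Jb) => y Jy.
  by exists 0, y; split; [exact: I0 | exact: Jy | rewrite add0r].
Qed.

End DifferencePolynomials.

Theorem corollary5p13 (k : fieldType) (s : {rmorphism k -> k}) (n : nat) :
  [pchar k] =i pred0 ->
  forall I J : dpoly k n -> Prop,
    is_monomial_sigma_ideal s I -> is_monomial_sigma_ideal s J ->
    forall x : dpoly k n,
      rwm_closure s (ideal_add I J) x <->
      ideal_add (rwm_closure s I) (rwm_closure s J) x.
Proof.
move=> _ I J monoI monoJ x.
have [[idealI _] _ _] := rwm_closure_rwm s I.
have [[idealJ _] _ _] := rwm_closure_rwm s J.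
split=> [/(rwm_closure_add_msupp monoI monoJ)|]; first exact: ideal_add_msupp.
by apply: rwm_closure_ideal_add; [apply: (ideal0 monoI.1.1) | apply: (ideal0 monoJ.1.1)].
Qed.
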